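(* Let $q\ge3$ be a prime power and let $\{P_i\}$ be an infinite family of toric codes over $\mathbb{F}_q$, with $P_i\subseteq[0,q-2]^{n_i}$. If there is $I$ such that $L(P_i)\le q-3$ for all $i\ge I$, then $R(P_i)\to0$ as $i\to\infty$.
   Context: For an integral convex polytope $P\subseteq[0,q-2]^n$, $R(P)=|P\cap\mathbb{Z}^n|/(q-1)^n$ and $\delta(P)=\big((q-1)^n-N(P)\big)/(q-1)^n$, where $N(P)$ is the maximum number of zeros in $(\mathbb{F}_q^\times)^n$ of a nonzero $\mathbb{F}_q$-linear combination of the monomials $x^p$, $p\in P\cap\mathbb{Z}^n$. A sequence of nonempty integral convex polytopes $P_i\subseteq[0,q-2]^{n_i}$ is an infinite family of toric codes if $n_i\to\infty$ and $\delta(P_i)$, $R(P_i)$ converge. The Minkowski length $\ell(P)$ is the largest number of summands in a decomposition of $P$ as a Minkowski sum of lattice polytopes of positive dimension ($\ell=0$ for a point); the full Minkowski length is $L(P)=\max\{\ell(Q):Q\subseteq P\text{ a lattice polytope}\}$. *)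

From HB Require Import structures.
From mathcomp Require Import all_boot all_order all_algebra all_field.
From mathcomp Require Import all_classical all_reals all_analysis.
Set Implicit Arguments. Unset Strict Implicit. Unset Printing Implicit Defensive.
Import Order.TTheory GRing.Theory Num.Theory numFieldNormedType.Exports.
Local Open Scope ring_scope.

Section Polytopes.
Variable R : realType.

Definition lattice_pt n (x : 'rV[R]_n) : Prop :=
  forall j : 'I_n, exists z : int, x ord0 j = z%:~R.

Definition conv n (S : seq 'rV[R]_n) (x : 'rV[R]_n) : Prop :=
  exists w : 'I_(size S) -> R,
    (forall i, 0 <= w i) /\ \sum_i w i = 1 /\ x = \sum_i w i *: S`_i.

Definition lattice_polytope n (P : set 'rV[R]_n) : Prop :=
  exists S : seq 'rV[R]_n, S != [::] /\ (forall s, s \in S -> lattice_pt s) /\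
    (forall x, P x <-> conv S x).

Definition pos_dim n (P : set 'rV[R]_n) : Prop :=
  exists x y, P x /\ P y /\ x != y.

Definition msum n l (Qs : 'I_l -> set 'rV[R]_n) (x : 'rV[R]_n) : Prop :=
  exists y : 'I_l -> 'rV[R]_n, (forall i, Qs i (y i)) /\ x = \sum_i y i.

(* P is a Minkowski sum of l lattice polytopes of positive dimension
   (l = 0 : the trivial, empty decomposition) *)
Definition mdecomp n (P : set 'rV[R]_n) (l : nat) : Prop :=
  l = 0%N \/ exists Qs : 'I_l -> set 'rV[R]_n,
    (forall i, lattice_polytope (Qs i) /\ pos_dim (Qs i)) /\
    (forall x, P x <-> msum Qs x).

Definition is_minkowski_length n (P : set 'rV[R]_n) (l : nat) : Prop :=
  mdecomp P l /\ forall m, mdecomp P m -> (m <= l)%N.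

Definition is_full_minkowski_length n (P : set 'rV[R]_n) (L : nat) : Prop :=
  (exists Q, lattice_polytope Q /\ (forall x, Q x -> P x) /\
             is_minkowski_length Q L) /\
  (forall Q l, lattice_polytope Q -> (forall x, Q x -> P x) ->
             is_minkowski_length Q l -> (l <= L)%N).

Definition in_box n (b : nat) (P : set 'rV[R]_n) : Prop :=
  forall x, P x -> forall j : 'I_n, 0 <= x ord0 j <= b%:R.

End Polytopes.

Section ToricCodes.
Variables (R : realType) (F : finFieldType).

Local Notation q := #|F|.

Definition expo n := {ffun 'I_n -> 'I_(q.-1)}.

Definition expo_pt n (e : expo n) : 'rV[R]_n := \row_j ((e j : nat)%:R).

Definition lpts n (P : set 'rV[R]_n) : {set expo n} :=
  [set e : expo n | `[< P (expo_pt e) >]].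

Definition peval n (c : {ffun expo n -> F}) (t : {ffun 'I_n -> F}) : F :=
  \sum_(e : expo n) c e * \prod_(j : 'I_n) t j ^+ (e j : nat).

Definition nzeros n (c : {ffun expo n -> F}) : nat :=
  #|[set t : {ffun 'I_n -> F} | [forall j, t j != 0] && (peval c t == 0)]|.

Definition Nmax n (P : set 'rV[R]_n) : nat :=
  \max_(c : {ffun expo n -> F} |
          (c != 0) && [forall e, (c e != 0) ==> (e \in lpts P)]) nzeros c.

Definition rate n (P : set 'rV[R]_n) : R :=
  (#|lpts P|)%:R / ((q.-1) ^ n)%:R.

Definition mindist n (P : set 'rV[R]_n) : R :=
  (((q.-1) ^ n)%:R - (Nmax P)%:R) / ((q.-1) ^ n)%:R.

Definition toric_family (nn : nat -> nat) (P : forall i, set 'rV[R]_(nn i)) :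
    Prop :=
  (forall i, lattice_polytope (P i) /\ in_box q.-2 (P i)) /\
  (forall M, exists I, forall i, (I <= i)%N -> (M <= nn i)%N) /\
  cvgn (fun i => mindist (P i)) /\ cvgn (fun i => rate (P i)).

End ToricCodes.

(* If two distinct lattice points e, e' of P are congruent modulo k = q - 2,
   then e' = e + k w for a nonzero lattice vector w, and the segment [e, e']
   is the Minkowski sum of k lattice segments [c, c + w]; it lies in P by
   convexity, so L(P) >= k = q - 2.  Hence L(P) <= q - 3 forces reduction
   modulo q - 2 to be injective on P ∩ Z^n, so that
   R(P) <= ((q - 2) / (q - 1))^n, which tends to 0 as n grows. *)
From Pilot Require Import Defs.
From HB Require Import structures.
From mathcomp Require Import all_boot all_order all_algebra all_field.
From mathcomp Require Import all_classical all_reals all_analysis.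
From mathcomp Require Import lra zify.
Import Order.TTheory GRing.Theory Num.Theory numFieldNormedType.Exports.
Set Implicit Arguments. Unset Strict Implicit. Unset Printing Implicit Defensive.
Local Open Scope ring_scope.
Local Open Scope classical_set_scope.
Local Notation conv := Defs.conv.
Local Notation msum := Defs.msum.

Section ConvexHull.
Variables (R : realType) (n : nat).
Implicit Types (S : seq 'rV[R]_n) (a b x y : 'rV[R]_n).

Lemma conv_comb S x y t : conv S x -> conv S y -> 0 <= t <= 1 ->
  conv S ((1 - t) *: x + t *: y).
Proof.
move=> [wx [wx0 [wx1 ->]]] [wy [wy0 [wy1 ->]]] /andP[t0 t1].
exists (fun i => (1 - t) * wx i + t * wy i); split.
  by move=> i; rewrite addr_ge0 // mulr_ge0 ?wx0 ?wy0 // subr_ge0.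
split; first by rewrite big_split /= -!mulr_sumr wx1 wy1 !mulr1 subrK.
rewrite !scaler_sumr -big_split /=; apply: eq_bigr => i _ /=.
by rewrite [in RHS]scalerDl !scalerA.
Qed.

Lemma conv_mem S s : s \in S -> conv S s.
Proof.
move=> sS; have iS : (index s S < size S)%N by rewrite index_mem.
pose i0 := Ordinal iS.
exists (fun i => if i == i0 then 1 else 0); split; first by move=> i; case: ifP.
split; first by rewrite (bigD1 i0) //= eqxx big1 ?addr0 // => i /negbTE ->.
rewrite (bigD1 i0) //= eqxx scale1r (nth_index 0 sS) big1 ?addr0 // => i /negbTE ->.
by rewrite scale0r.
Qed.

Lemma conv_eq_const S s0 x : conv S x -> {in S, forall s, s = s0} -> x = s0.
Proof.
move=> [w [_ [w1 ->]]] S_s0.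
rewrite (eq_bigr (fun i => w i *: s0)) => [|i _]; last by rewrite (S_s0 S`_i) ?mem_nth.
by rewrite -scaler_suml w1 scale1r.
Qed.

Definition seg a b : set 'rV[R]_n :=
  fun x => exists t, 0 <= t <= 1 /\ x = a + t *: (b - a).

Lemma segE a b t : a + t *: (b - a) = (1 - t) *: a + t *: b.
Proof. by rewrite scalerBr scalerBl scale1r addrAC addrA. Qed.

Lemma seg_conv a b x : seg a b x <-> conv [:: a; b] x.
Proof.
split=> [[t [/andP[t0 t1] ->]]|[w [w0 [w1 ->]]]].
  exists (fun i : 'I_2 => if val i == 0%N then 1 - t else t); split.
    by move=> i; case: ifP => _ //; rewrite subr_ge0.
  split; first by rewrite big_ord_recl big_ord1 /= subrK.
  by rewrite big_ord_recl big_ord1 /= segE.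
move: w1; rewrite big_ord_recl big_ord1 => w1.
exists (w (lift ord0 ord0)); split.
  by rewrite w0 /= -w1 lerDr w0.
by rewrite big_ord_recl big_ord1 /= segE -w1 addrK.
Qed.

Lemma conv_seg_sub S a b : conv S a -> conv S b -> seg a b `<=` conv S.
Proof. by move=> Sa Sb x [t [t01 ->]]; rewrite segE; exact: conv_comb. Qed.

Lemma seg_scaleE a w k x :
  seg a (a + k *: w) x <-> exists t, 0 <= t <= 1 /\ x = a + (t * k) *: w.
Proof.
rewrite /seg addrAC subrr add0r.
by split=> -[t [t01 ->]]; exists t; rewrite scalerA.
Qed.

Lemma seg_scale_sub a w (k : R) x y : 0 <= k ->
  seg a (a + k *: w) x -> seg a (a + k *: w) y ->
  exists r, x - y = r *: w /\ `|r| <= k.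
Proof.
move=> k0 /seg_scaleE[t [/andP[t0 t1] ->]] /seg_scaleE[s [/andP[s0 s1] ->]].
exists (t * k - s * k); split.
  by rewrite opprD addrA (addrAC a) subrr add0r scalerBl.
rewrite -mulrBl normrM (ger0_norm k0) ler_piMl // ler_norml.
by apply/andP; split; lra.
Qed.

End ConvexHull.

Section LatticeSegments.
Variables (R : realType) (n : nat).
Implicit Types (a b u v w x y : 'rV[R]_n).
Local Notation lat := (@lattice_pt R n).

Lemma lattice_pt0 : lat 0.
Proof. by move=> j; exists 0; rewrite mxE. Qed.

Lemma lattice_ptD x y : lat x -> lat y -> lat (x + y).
Proof.
move=> lx ly j; have [zx xj] := lx j; have [zy yj] := ly j.
by exists (zx + zy); rewrite !mxE xj yj intrD.
Qed.

Lemma lattice_ptB x y : lat x -> lat y -> lat (x - y).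
Proof.
move=> lx ly j; have [zx xj] := lx j; have [zy yj] := ly j.
by exists (zx - zy); rewrite !mxE xj yj intrB.
Qed.

Lemma lattice_polytope_seg a b : lat a -> lat b -> lattice_polytope (seg a b).
Proof.
move=> la lb; exists [:: a; b]; split=> //; split; last exact: seg_conv.
by move=> s; rewrite !inE => /orP[] /eqP ->.
Qed.

Lemma pos_dim_seg a b : a != b -> pos_dim (seg a b).
Proof.
move=> ab; exists a, b; split; first by exists 0; rewrite lexx ler01 scale0r addr0.
split=> //; exists 1; rewrite lexx ler01 scale1r; split=> //.
by rewrite addrC subrK.
Qed.

Lemma lattice_polytope_two_points (Q : set 'rV[R]_n) :
  lattice_polytope Q -> pos_dim Q -> exists u v, [/\ Q u, Q v, lat u, lat v & u != v].
Proof.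
move=> [S [S0 [S_lat SQ]]] [p [p' [Qp [Qp' pp']]]].
have S0S : S`_0 \in S by rewrite mem_nth // lt0n size_eq0.
have [/allP S_const|/allPn[s sS ns]] := boolP (all (eq_op^~ S`_0) S).
  have S_s0 : {in S, forall s, s = S`_0} by move=> s /S_const /eqP.
  rewrite (conv_eq_const ((SQ p).1 Qp) S_s0) in pp'.
  by rewrite (conv_eq_const ((SQ p').1 Qp') S_s0) eqxx in pp'.
by exists s, S`_0; split; try apply: S_lat; try apply/SQ/conv_mem.
Qed.

(* The segment [a, a + k w] is the Minkowski sum of [a, a + w] and k - 1
   copies of [0, w]. *)
Lemma mdecomp_seg_scale a w k : (0 < k)%N -> w != 0 -> lat a -> lat w ->
  mdecomp (seg a (a + k%:R *: w)) k.
Proof.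
move=> k0 w0 la lw; right.
pose i0 := Ordinal k0.
pose c (i : 'I_k) := if i == i0 then a else 0.
have sum_c : \sum_i c i = a.
  by rewrite (bigD1 i0) //= /c eqxx big1 ?addr0 // => i /negbTE ->.
exists (fun i => seg (c i) (c i + w)); split.
  move=> i; have lc : lat (c i) by rewrite /c; case: ifP => _; last exact: lattice_pt0.
  split; first by apply: lattice_polytope_seg => //; apply: lattice_ptD.
  by apply: pos_dim_seg; rewrite -subr_eq0 opprD addrA subrr sub0r oppr_eq0.
move=> x; rewrite seg_scaleE; split=> [[t [t01 ->]]|[y [Qy ->]]].
  exists (fun i => c i + t *: w); split.
    by move=> i; exists t; rewrite addrAC subrr add0r.
  by rewrite big_split /= sum_c sumr_const card_ord scalerMnl mulr_natr.
have /boolp.choice[tt tt_y] : forall i, exists t, 0 <= t <= 1 /\ y i = c i + t *: w.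
  by move=> i; have [t [t01 ->]] := Qy i; exists t; rewrite addrAC subrr add0r.
have kR : 0 < (k%:R : R) by rewrite ltr0n.
exists ((\sum_i tt i) / k%:R); split.
  apply/andP; split.
    by rewrite divr_ge0 ?sumr_ge0 ?ltW // => i _; case/andP: (tt_y i).1.
  rewrite ler_pdivrMr // mul1r -[in k%:R](card_ord k) -sumr_const.
  by apply: ler_sum => i _; case/andP: (tt_y i).1.
rewrite divfK ?gt_eqF // (eq_bigr (fun i => c i + tt i *: w)) => [|i _]; last first.
  by rewrite (tt_y i).2.
by rewrite big_split /= sum_c scaler_suml.
Qed.

Lemma msum_sub_summand l (Qs : 'I_l -> set 'rV[R]_n) :
  (forall i, exists y, Qs i y) -> forall i u v, Qs i u -> Qs i v ->
  exists x y, [/\ msum Qs x, msum Qs y & x - y = u - v].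
Proof.
move=> /boolp.choice[b Qs_b] i u v Qu Qv.
pose X z := \sum_j (if j == i then z else b j).
have msumX z : Qs i z -> msum Qs (X z).
  move=> Qz; exists (fun j => if j == i then z else b j).
  by split=> // j; case: eqP => [->|].
exists (X u), (X v); split; try exact: msumX.
rewrite /X -sumrB (bigD1 i) //= !eqxx big1 ?addr0 // => j /negbTE ->.
by rewrite subrr.
Qed.

(* Two distinct lattice points of a summand differ by a multiple of w whose
   j0-th coordinate is a nonzero integer; order them to make it positive. *)
Lemma mdecomp_seg_summand_gap a w k (j0 : 'I_n) l
    (Qs : 'I_l -> set 'rV[R]_n) :
  w ord0 j0 != 0 -> (forall i, lattice_polytope (Qs i) /\ pos_dim (Qs i)) ->
  (forall x, seg a (a + k%:R *: w) x <-> msum Qs x) ->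
  forall i, exists u v, [/\ Qs i u, Qs i v & 1 <= (u - v) ord0 j0].
Proof.
move=> wj0 Qs_poly segQ i.
have [u [v [Qu Qv lu lv uv]]] := lattice_polytope_two_points (Qs_poly i).1 (Qs_poly i).2.
have Qs_ne j : exists y, Qs j y.
  by have [y [_ [Qy _]]] := (Qs_poly j).2; exists y.
have [x [y [/segQ seg_x /segQ seg_y xy]]] := msum_sub_summand Qs_ne Qu Qv.
have [r [uv_r _]] := seg_scale_sub (ler0n _ k) seg_x seg_y.
rewrite xy in uv_r.
have [z z_uv] := lattice_ptB lu lv j0.
have z0 : z != 0.
  apply: contra uv => /eqP z0; move: z_uv; rewrite z0 uv_r mxE mulr0z => /eqP.
  by rewrite mulf_eq0 (negbTE wj0) orbF => /eqP r0; rewrite -subr_eq0 uv_r r0 scale0r.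
have : 1 <= `|(u - v) ord0 j0| by rewrite z_uv norm_intr_ge1 ?intr_int ?intr_eq0.
case: ltrgt0P => _; last by rewrite ler10.
- by exists u, v.
- by move=> ?; exists v, u; rewrite -opprB mxE.
Qed.

Lemma mdecomp_seg_le a w k (j0 : 'I_n) (z0 : int) :
  w ord0 j0 = z0%:~R -> z0 != 0 ->
  forall m, mdecomp (seg a (a + k%:R *: w)) m -> (m <= k * `|z0|)%N.
Proof.
move=> wj0 z00 m [->//|[Qs [Qs_poly segQ]]].
have wj0_ne : w ord0 j0 != 0 by rewrite wj0 intr_eq0.
have /boolp.choice[uv Quv] : forall i, exists uv : 'rV[R]_n * 'rV[R]_n,
    [/\ Qs i uv.1, Qs i uv.2 & 1 <= (uv.1 - uv.2) ord0 j0].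
  move=> i; have [u [v ?]] := mdecomp_seg_summand_gap wj0_ne Qs_poly segQ i.
  by exists (u, v).
have Qu i : Qs i (uv i).1 by case: (Quv i).
have Qv i : Qs i (uv i).2 by case: (Quv i).
have seg_sum (p : 'rV[R]_n * 'rV[R]_n -> 'rV[R]_n) :
    (forall i, Qs i (p (uv i))) -> seg a (a + k%:R *: w) (\sum_i p (uv i)).
  by move=> Qp; apply/segQ; exists (fun i => p (uv i)).
have [r [uv_r r_le]] := seg_scale_sub (ler0n _ k)
  (seg_sum fst Qu) (seg_sum snd Qv).
have m_le : (m%:R : R) <= (\sum_i (uv i).1 - \sum_i (uv i).2) ord0 j0.
  rewrite -sumrB summxE -[in m%:R](card_ord m) -sumr_const.
  by apply: ler_sum => i _; case: (Quv i).
have le_kz : (\sum_i (uv i).1 - \sum_i (uv i).2) ord0 j0 <= (k * `|z0|)%N%:R.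
  rewrite uv_r mxE wj0 natrM natr_absz intr_norm (le_trans (ler_norm _)) //.
  by rewrite normrM ler_wpM2r.
by rewrite -(ler_nat R) (le_trans m_le).
Qed.

Lemma minkowski_length_seg_ge a w k : (0 < k)%N -> lat a -> lat w -> w != 0 ->
  exists l, is_minkowski_length (seg a (a + k%:R *: w)) l /\ (k <= l)%N.
Proof.
move=> k0 la lw w0.
have [j0 wj0] : exists j, w ord0 j != 0.
  apply/existsP; apply: contraR w0 => /existsPn w_0.
  by apply/eqP/rowP => j; rewrite mxE; apply/eqP/negPn/w_0.
have [z0 wz0] := lw j0.
have z00 : z0 != 0 by apply: contra wj0 => /eqP z0_0; rewrite wz0 z0_0.
pose dec m := `[< mdecomp (seg a (a + k%:R *: w)) m >].
have dec_k : dec k by apply/asboolP/mdecomp_seg_scale.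
have dec_le m : dec m -> (m <= k * `|z0|)%N.
  by move/asboolP; apply: mdecomp_seg_le wz0 z00 m.
have [l /asboolP dec_l l_max] := ex_maxnP (ex_intro _ k dec_k) dec_le.
exists l; split; last exact: l_max.
by split=> // m /asboolP; apply: l_max.
Qed.

End LatticeSegments.

Lemma expo_pt_lattice_pt (R : realType) (F : finFieldType) n (e : expo F n) :
  lattice_pt (expo_pt R e).
Proof. by move=> j; exists (e j : nat)%:Z; rewrite mxE. Qed.

Lemma card_lpts_le (R : realType) (F : finFieldType) n (P : set 'rV[R]_n) :
  (3 <= #|F|)%N -> lattice_polytope P ->
  (exists L, is_full_minkowski_length P L /\ (L <= #|F| - 3)%N) ->
  (#|lpts F P| <= (#|F| - 2) ^ n)%N.
Proof.
move=> q3 [S [_ [_ SP]]] [L [[_ L_max] Lq]].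
set k := (#|F| - 2)%N; have k0 : (0 < k)%N by rewrite /k subn_gt0.
pose f (e : expo F n) : {ffun 'I_n -> 'I_k} :=
  [ffun j => Ordinal (ltn_pmod (e j : nat) k0)].
suff f_inj : {in lpts F P &, injective f}.
  rewrite -(card_in_imset f_inj) (leq_trans (max_card _)) //.
  by rewrite card_ffun !card_ord.
move=> e e' + + fe; rewrite !inE => Pe Pe'.
case: (eqVneq e e') => // ne; exfalso.
have mod_e j : (e j %% k = e' j %% k)%N.
  by have := congr1 (fun g : {ffun 'I_n -> 'I_k} => val (g j)) fe; rewrite !ffunE.
pose w : 'rV[R]_n := \row_j ((((e' j : nat) %/ k)%:Z - ((e j : nat) %/ k)%:Z)%:~R).
have e'_e : expo_pt R e' = expo_pt R e + k%:R *: w.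
  apply/rowP => j; rewrite !mxE intrB {1}(divn_eq (e' j) k) {1}(divn_eq (e j) k).
  by rewrite mod_e !natrD !natrM -!pmulrn; lra.
have lw : lattice_pt w by move=> j; eexists; rewrite mxE.
have w0 : w != 0.
  apply: contra ne => /eqP w0; rewrite w0 scaler0 addr0 in e'_e.
  apply/eqP/ffunP => j; apply/val_inj/eqP.
  have := congr1 (fun x : 'rV[R]_n => x ord0 j) e'_e.
  by rewrite !mxE => /eqP; rewrite eqr_nat eq_sym.
have [l [ml_seg kl]] := minkowski_length_seg_ge k0 (expo_pt_lattice_pt R e) lw w0.
rewrite -e'_e in ml_seg.
have seg_P : seg (expo_pt R e) (expo_pt R e') `<=` P.
  by move=> x /(conv_seg_sub ((SP _).1 Pe) ((SP _).1 Pe')) /SP.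
have := L_max _ l (lattice_polytope_seg (expo_pt_lattice_pt R e)
  (expo_pt_lattice_pt R e')) seg_P ml_seg.
by move: kl Lq q3; rewrite /k; lia.
Qed.

Lemma rate_le_expr (R : realType) (F : finFieldType) n (P : set 'rV[R]_n) :
  (3 <= #|F|)%N -> lattice_polytope P ->
  (exists L, is_full_minkowski_length P L /\ (L <= #|F| - 3)%N) ->
  rate F P <= ((#|F| - 2)%:R / (#|F|.-1)%:R) ^+ n.
Proof.
move=> q3 polyP LP; rewrite /rate expr_div_n -!natrX ler_wpM2r ?invr_ge0 //.
by rewrite ler_nat card_lpts_le.
Qed.

Lemma cvg_expr_comp (R : realType) (r : R) (nn : nat -> nat) :
  `|r| < 1 -> (forall M, exists I, forall i, (I <= i)%N -> (M <= nn i)%N) ->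
  (fun i => r ^+ nn i) @ \oo --> 0.
Proof.
move=> r1 nn_unbounded.
have nn_oo : nn @ \oo --> \oo.
  move=> A [M _ MA]; have [I nnI] := nn_unbounded M.
  by exists I => // i /nnI /MA.
exact: (cvg_comp _ _ nn_oo (cvg_expr r1)).
Qed.

Theorem mainTheorem15 (R : realType) (F : finFieldType)
    (nn : nat -> nat) (P : forall i, set 'rV[R]_(nn i)) :
  (3 <= #|F|)%N ->
  toric_family F P ->
  (exists I, forall i, (I <= i)%N ->
     exists L, is_full_minkowski_length (P i) L /\ (L <= #|F| - 3)%N) ->
  (fun i => rate F (P i)) @ \oo --> (0 : R).
Proof.
move=> q3 [P_poly [nn_unbounded _]] [I LP].
set r : R := (#|F| - 2)%:R / (#|F|.-1)%:R.
have r_lt1 : `|r| < 1.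
  have q1 : (0 : R) < (#|F|.-1)%:R by rewrite ltr0n; lia.
  by rewrite ger0_norm ?divr_ge0 // ltr_pdivrMr // mul1r ltr_nat; lia.
apply: (squeeze_cvgr _ (cvg_cst 0) (cvg_expr_comp r_lt1 nn_unbounded)).
exists I => // i /= iI; rewrite divr_ge0 //=.
exact: rate_le_expr (P_poly i).1 (LP i iI).
Qed.
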